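(* For a word $w=w_1\cdots w_n$ over $\{1,2,3,4\}$ let $r(w)=|\{i: w_{i+1}-w_i=2,\ w_{i+1}\text{ odd}\}|+|\{i: w_{i+2}-w_i=2,\ w_{i+2}\text{ odd}\}|$ (the number of occurrences of the place-difference-value pattern $(12,(\mathbb{P},\{1,2\},\mathbb{P}),\{(1,2,\{2\})\},(\mathbb{O},\mathbb{P}))$, i.e. pairs of odd letters at distance $1$ or $2$ whose later letter exceeds the earlier one by exactly $2$). Then $$\sum_{w\in\{1,2,3,4\}^*}q^{|w|}z^{r(w)}=\frac{1}{1-4q-(z-1)q^2-2(z^2-1)q^3-z(z-1)^2q^4}.$$
   Context: The sum ranges over all finite words over $\{1,2,3,4\}$, including the empty word; $|w|$ denotes length; $\mathbb{O}$ is the set of odd numbers. *)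

From mathcomp Require Import all_boot all_order all_algebra.
Set Implicit Arguments. Unset Strict Implicit. Unset Printing Implicit Defensive.
Import GRing.Theory.
Local Open Scope ring_scope.

Definition rstat (w : seq nat) : nat :=
  (count (fun i => (nth 0%N w i.+1 == nth 0%N w i + 2)%N && odd (nth 0%N w i.+1))
         (iota 0 (size w - 1)) +
   count (fun i => (nth 0%N w i.+2 == nth 0%N w i + 2)%N && odd (nth 0%N w i.+2))
         (iota 0 (size w - 2)))%N.

Definition word_of (n : nat) (t : n.-tuple 'I_4) : seq nat :=
  [seq (val j).+1 | j <- t].

(* Coefficient of q^n in the generating function: a polynomial in z. *)
Definition Fcoef (n : nat) : {poly int} :=
  \sum_(t : n.-tuple 'I_4) 'X^(rstat (word_of t)).

(* The denominator 1-4q-(z-1)q^2-2(z^2-1)q^3-z(z-1)^2 q^4 as a polynomial in q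
   with coefficients in Z[z]. *)
Definition zvar : {poly int} := 'X.
Definition Denom : {poly {poly int}} :=
  1 - (4%:R : {poly int})%:P * 'X
    - (zvar - 1)%:P * 'X^2
    - (2%:R * (zvar ^+ 2 - 1))%:P * 'X^3
    - (zvar * (zvar - 1) ^+ 2)%:P * 'X^4.

From mathcomp Require Import all_boot all_order all_algebra.
From mathcomp Require Import ring zify.
Import GRing.Theory.

(* Over {1,2,3,4} the only odd letter exceeding another one by 2 is 3 = 1 + 2,
   so prepending a letter c to a word w creates [c = 1] * ([w_1 = 3] + [w_2 = 3])
   new occurrences.  Refining the length-n coefficient by the state
   ([w_1 = 3], [w_2 = 3]) therefore gives a linear recursion with a 4x4 transfer
   matrix whose characteristic polynomial is the reversed denominator; by
   Cayley-Hamilton the coefficients obey the matching order-4 recurrence, and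
   the first four coefficients are the initial conditions. *)

Lemma big_tuple_cons (R : Type) (idx : R) (op : Monoid.com_law idx)
    (T : finType) n (F : n.+1.-tuple T -> R) :
  \big[op/idx]_(t : n.+1.-tuple T) F t =
  \big[op/idx]_(x : T) \big[op/idx]_(t : n.-tuple T) F [tuple of x :: t].
Proof.
rewrite pair_big (reindex (fun p : T * n.-tuple T => [tuple of p.1 :: p.2])) //.
exists (fun t => (thead t, [tuple of behead t])) => [[x t] _ | t _] /=.
  by congr pair; apply: val_inj.
by rewrite [RHS]tuple_eta.
Qed.

Lemma count_iotaS (p : pred nat) m k :
  count p (iota m.+1 k) = count (fun i => p i.+1) (iota m k).
Proof. by elim: k m => [|k IHk] m //=; rewrite IHk. Qed.

Lemma rstat_cons c w : rstat (c :: w) = rstat w +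
   ((nth 0 w 0 == c + 2) && odd (nth 0 w 0)) +
   ((nth 0 w 1 == c + 2) && odd (nth 0 w 1)).
Proof.
case: w => [|x [|y w]]; rewrite /rstat /= ?andbF ?addn0 //.
by rewrite !subSS subn0 !count_iotaS /=; lia.
Qed.

Lemma nth_word_of_le4 n (t : n.-tuple 'I_4) i : nth 0 (word_of t) i <= 4.
Proof.
have [lt_i_n | le_n_i] := ltnP i (size t).
  by rewrite (nth_map ord0) ?ltn_ord.
by rewrite nth_default ?size_map.
Qed.

Lemma odd_rise2_letterE x c : x <= 4 -> c < 4 ->
  (x == c.+1 + 2) && odd x = (c == 0) && (x == 3).
Proof. by case: x => [|[|[|[|[|x]]]]] //; case: c => [|[|[|[|c]]]]. Qed.

Lemma rstat_word_of_cons n (t : n.-tuple 'I_4) (c : 'I_4) :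
  rstat ((val c).+1 :: word_of t) = rstat (word_of t) +
    (c == 0 :> nat) && (nth 0 (word_of t) 0 == 3) +
    (c == 0 :> nat) && (nth 0 (word_of t) 1 == 3).
Proof. by rewrite rstat_cons !odd_rise2_letterE ?nth_word_of_le4 ?ltn_ord. Qed.

Local Open Scope ring_scope.

Definition Fpart n (a b : bool) : {poly int} :=
  \sum_(t : n.-tuple 'I_4)
    ((nth 0%N (word_of t) 0 == 3%N) == a)%:R *
    ((nth 0%N (word_of t) 1 == 3%N) == b)%:R * 'X^(rstat (word_of t)).

Lemma Fpart_succ n a b : Fpart n.+1 a b =
  \sum_(t : n.-tuple 'I_4) \sum_(c < 4)
    (((val c).+1 == 3%N) == a)%:R *
    ((nth 0%N (word_of t) 0 == 3%N) == b)%:R *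
    'X^(rstat ((val c).+1 :: word_of t)).
Proof. by rewrite /Fpart big_tuple_cons exchange_big. Qed.

Lemma Fpart_head3 n b : Fpart n.+1 true b = Fpart n b true + Fpart n b false.
Proof.
rewrite Fpart_succ -big_split; apply: eq_bigr => t _ /=.
rewrite !big_ord_recl big_ord0 !rstat_word_of_cons /=.
case: (nth 0%N (word_of t) 0 == 3%N); case: (nth 0%N (word_of t) 1 == 3%N);
  by case: b; rewrite /= ?exprD; ring.
Qed.

Lemma Fpart_head_not3 n b : Fpart n.+1 false b =
  (2%:R + 'X^(b.+1)) * Fpart n b true + (2%:R + 'X^b) * Fpart n b false.
Proof.
rewrite Fpart_succ /Fpart !mulr_sumr -big_split; apply: eq_bigr => t _ /=.
rewrite !big_ord_recl big_ord0 !rstat_word_of_cons /=.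
case: (nth 0%N (word_of t) 0 == 3%N); case: (nth 0%N (word_of t) 1 == 3%N);
  by case: b; rewrite /= ?exprD; ring.
Qed.

Lemma Fpart0 a b : Fpart 0 a b = (~~ a && ~~ b)%:R.
Proof.
rewrite /Fpart (big_pred1 [tuple]) => [|t]; last exact/esym/eqP/tuple0.
by case: a; case: b; rewrite /=; ring.
Qed.

Lemma Fcoef_Fpart n :
  Fcoef n = Fpart n true true + Fpart n true false + Fpart n false true + Fpart n false false.
Proof.
rewrite /Fcoef /Fpart -!big_split; apply: eq_bigr => t _ /=.
by case: (nth 0%N (word_of t) 0 == 3%N); case: (nth 0%N (word_of t) 1 == 3%N);
  rewrite /=; ring.
Qed.

Lemma Fcoef_rec m : Fcoef m.+4 =
  4%:R * Fcoef m.+3 + (zvar - 1) * Fcoef m.+2 +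
  2%:R * (zvar ^+ 2 - 1) * Fcoef m.+1 + zvar * (zvar - 1) ^+ 2 * Fcoef m.
Proof.
rewrite !Fcoef_Fpart; do ![rewrite Fpart_head3 | rewrite Fpart_head_not3].
by rewrite /zvar; ring.
Qed.

Lemma Fcoef_initial : [/\ Fcoef 0 = 1, Fcoef 1 = 4%:R,
  Fcoef 2 = 15%:R + zvar & Fcoef 3 = 54%:R + 8%:R * zvar + 2%:R * zvar ^+ 2].
Proof.
split; rewrite Fcoef_Fpart; do ?[rewrite Fpart_head3 | rewrite Fpart_head_not3].
all: by rewrite !Fpart0 /zvar /=; ring.
Qed.

Lemma DenomE k : Denom`_k =
  if k == 0%N then 1 else if k == 1%N then - 4%:R
  else if k == 2%N then - (zvar - 1)
  else if k == 3%N then - (2%:R * (zvar ^+ 2 - 1))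
  else if k == 4%N then - (zvar * (zvar - 1) ^+ 2) else 0.
Proof.
rewrite /Denom !coefB !coefCM !coefXn coef1 coefX.
by case: k => [|[|[|[|[|k]]]]] /=; ring.
Qed.

Theorem mainTheorem9 : forall n : nat,
  \sum_(k < n.+1) Denom`_k * Fcoef (n - k) = (n == 0%N)%:R.
Proof.
have [F0 F1 F2 F3] := Fcoef_initial.
case=> [|[|[|[|m]]]].
- by rewrite big_ord_recl big_ord0 DenomE F0 /=; ring.
- by rewrite !big_ord_recl big_ord0 !DenomE /= F0 F1; ring.
- by rewrite !big_ord_recl big_ord0 !DenomE /= F0 F1 F2; ring.
- by rewrite !big_ord_recl big_ord0 !DenomE /= F0 F1 F2 F3; ring.
rewrite !big_ord_recl big1 => [|i _]; last by rewrite DenomE mul0r.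
by rewrite !DenomE /= !subSS !subn0 Fcoef_rec; ring.
Qed.
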